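(* Let $P$ be the transition matrix of a reversible and ergodic Markov chain on $V$ with stationary distribution $\pi$ and mixing rate $t^*$. For the billiard router model for $P$, with any initial configuration, $$\left|\chi^{(T)}_w-\mu^{(T)}_w\right|\le\frac{6\pi_w}{\pi_{\min}}\,t^*\,(\Delta-1)$$ for all $w\in V$ and $T\ge0$.
   Context: Let $V=\{1,\dots,N\}$ and let $P\in\mathbb{R}_{\ge 0}^{N\times N}$ be an ergodic (irreducible, aperiodic) stochastic matrix with stationary distribution $\pi$; $\pi_{\min}=\min_v\pi_v$; reversible means $\pi_uP_{u,v}=\pi_vP_{v,u}$ for all $u,v$. For $v\in V$ let $\mathcal N(v)=\{u: P_{v,u}>0\}$, $\delta(v)=|\mathcal N(v)|$, $\Delta=\max_v\delta(v)$. Total variation distance $d_{TV}(\xi,\zeta)=\frac12\|\xi-\zeta\|_1$; mixing time $\tau(\varepsilon)=\max_{v}\min\{t\ge0: d_{TV}(P^t_{v,\cdot},\pi)\le\varepsilon\}$; mixing rate $t^*=\tau(1/4)$. A functional-router model consists of functions $\sigma_v:\mathbb{Z}_{\ge0}\to\mathcal N(v)$; write $I_{v,u}[z,z')=|\{j\in\{z,\dots,z'-1\}:\sigma_v(j)=u\}|$ (zero if $z'\le z$). Given $\chi^{(0)}\in\mathbb{Z}_{\ge0}^N$, set $Z^{(t)}_{v,u}=I_{v,u}\big[\sum_{s=0}^{t-1}\chi^{(s)}_v,\sum_{s=0}^{t}\chi^{(s)}_v\big)$, $\chi^{(t+1)}_u=\sum_vZ^{(t)}_{v,u}$, $\mu^{(0)}=\chi^{(0)}$,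 $\mu^{(t)}=\mu^{(0)}P^t$. The billiard router is defined recursively: $\sigma_v(i)$ is an element $u\in\mathcal N(v)$ minimizing $(I_{v,u}[0,i)+1)/P_{v,u}$ (ties broken arbitrarily). It is known (billiard sequences) that for this router $|I_{v,u}[z,z')-(z'-z)P_{v,u}|\le 1+(\delta(v)-2)P_{v,u}$ for all $v,u$ and $z'>z\ge0$. *)

From HB Require Import structures.
From mathcomp Require Import all_boot all_order all_algebra.
Set Implicit Arguments. Unset Strict Implicit. Unset Printing Implicit Defensive.
Import Order.TTheory GRing.Theory Num.Theory.
Local Open Scope ring_scope.

Section MC.
Variables (R : realFieldType) (n : nat).
Local Notation V := 'I_n.+1.
Implicit Types (P : 'M[R]_n.+1) (pi : 'rV[R]_n.+1).

Definition stochastic P :=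
  (forall u v, 0 <= P u v) /\ (forall u, \sum_v P u v = 1).

Definition irreducible P := forall u v, exists t : nat, 0 < (P ^+ t) u v.

(* aperiodic: gcd{t >= 1 : P^t_{vv} > 0} = 1 for every v, i.e. no d > 1
   divides all return times *)
Definition aperiodic P :=
  forall v (d : nat), (1 < d)%N ->
    exists t : nat, [/\ (0 < t)%N, 0 < (P ^+ t) v v & ~~ (d %| t)%N].

Definition ergodic P := irreducible P /\ aperiodic P.

Definition stationary_distribution P pi :=
  [/\ forall v, 0 <= pi 0 v, \sum_v pi 0 v = 1 & pi *m P = pi].

Definition reversible P pi := forall u v, pi 0 u * P u v = pi 0 v * P v u.

Definition pi_min pi : R := \big[Order.min/pi 0 ord0]_(v < n.+1) pi 0 v.

Definition deg P (v : V) : nat := #|[set u | 0 < P v u]|.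
Definition max_deg P : nat := \max_(v < n.+1) deg P v.

Definition dTV (xi zeta : V -> R) : R := 2^-1 * \sum_u `|xi u - zeta u|.

Definition dist_to_stat P pi (t : nat) (v : V) : R :=
  dTV (fun u => (P ^+ t) v u) (fun u => pi 0 u).

(* tau = tau(eps) = max_v min {t : dTV(P^t_{v,.}, pi) <= eps} *)
Definition is_mixing_time P pi (eps : R) (tau : nat) :=
  (forall v, exists t : nat, (t <= tau)%N /\ dist_to_stat P pi t v <= eps) /\
  (exists v, forall t : nat, (t < tau)%N -> eps < dist_to_stat P pi t v).

Definition is_mixing_rate P pi (tstar : nat) := is_mixing_time P pi (4^-1) tstar.

Definition Icount (sigma : V -> nat -> V) (v u : V) (z z' : nat) : nat :=
  (\sum_(z <= j < z') (sigma v j == u))%N.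

Definition billiard_router P (sigma : V -> nat -> V) :=
  forall v (i : nat), 0 < P v (sigma v i) /\
    forall u, 0 < P v u ->
      ((Icount sigma v (sigma v i) 0 i).+1)%:R / P v (sigma v i)
        <= ((Icount sigma v u 0 i).+1)%:R / P v u.

(* state at time t: (chi^(t), cumulative sum_{s<t} chi^(s)) *)
Fixpoint router_state (sigma : V -> nat -> V) (chi0 : V -> nat) (t : nat)
  : (V -> nat) * (V -> nat) :=
  match t with
  | 0 => (chi0, fun _ => 0%N)
  | t'.+1 =>
      let: (c, Sc) := router_state sigma chi0 t' in
      (fun u => (\sum_(v < n.+1) Icount sigma v u (Sc v) (Sc v + c v))%N,
       fun v => (Sc v + c v)%N)
  end.

Definition chi (sigma : V -> nat -> V) (chi0 : V -> nat) (t : nat) : V -> nat :=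
  (router_state sigma chi0 t).1.

Definition mu P (chi0 : V -> nat) (t : nat) : 'rV[R]_n.+1 :=
  (\row_v (chi0 v)%:R) *m P ^+ t.

End MC.

(* Write x^(t) for the row vector of router loads chi^(t).  One routing step
   gives x^(t+1) = x^(t) P + e^(t), where the error e^(t) has total mass 0
   and, by the discrepancy bound of billiard sequences (derived below from
   the balance invariant of the router), |e^(t)_u| is at most
   sum_v (1 + (delta(v) - 2) P_{v,u}) <= 2 (Delta - 1) pi_u / pi_min
   (reversibility bounds the column sums of P and the in-degrees).
   Unrolling, x^(T) - mu^(T) = sum_{i<T} e^(T-1-i) (P^i - 1 pi); reversibility
   of P^i turns the w-th coordinate of each summand into a weighted row
   deviation pi_w / pi_u * |P^i_{w,u} - pi_u|, so everything reduces to
     sum_{s<T} ||P^s_{w,.} - pi||_1 <= 3 t*,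
   which follows from the Dobrushin contraction of P^m: the l1-deviation
   never increases and halves every t* steps. *)

From mathcomp Require Import all_boot all_order all_algebra.
From mathcomp Require Import ring lra.
Import Order.TTheory GRing.Theory Num.Theory.
Local Open Scope ring_scope.
Set Implicit Arguments. Unset Strict Implicit. Unset Printing Implicit Defensive.

Lemma sum_split_nat (R : realFieldType) (a b : nat) (F : nat -> R) :
  \sum_(0 <= i < a + b) F i = \sum_(0 <= i < a) F i + \sum_(0 <= i < b) F (i + a)%N.
Proof.
rewrite (big_cat_nat _ (n := a)) ?leq_addr //; congr (_ + _).
by rewrite -{1}(add0n a) big_addn addKn.
Qed.

Lemma sum_const_le (R : realFieldType) (m : nat) (F : nat -> R) (c : R) :
  (forall i, F i <= c) -> \sum_(0 <= i < m) F i <= c * m%:R.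
Proof.
move=> H; elim: m => [|m IH]; first by rewrite big_geq // mulr0.
by rewrite big_nat_recr //= -addn1 natrD mulrDr mulr1; apply: lerD.
Qed.

Lemma halving_sum_bound (R : realFieldType) (a : nat -> R) (t : nat) (c : R) :
  (forall s, 0 <= a s) -> (forall s, a s <= c) ->
  (forall s, a (s + t)%N <= a s / 2%:R) ->
  forall m, \sum_(0 <= s < m) a s <= 2%:R * c * t%:R.
Proof.
move=> a_ge0 a_le a_half m.
have c_ge0 : 0 <= c by apply: le_trans (a_ge0 0%N) (a_le 0%N).
have [t0 | t_neq0] := eqVneq t 0%N.
  rewrite t0 mulr0; apply: le_trans (sum_const_le _ (c := 0) _) _; rewrite ?mul0r //.
  by move=> s; have := a_half s; rewrite t0 addn0; have := a_ge0 s; lra.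
have t_gt0 : (0 < t)%N by rewrite lt0n.
elim/ltn_ind: m => m IH.
have [m_le | m_gt] := leqP m t.
  apply: le_trans (sum_const_le _ a_le) _.
  have : (m%:R <= t%:R :> R) by rewrite ler_nat.
  have : (0 <= m%:R :> R) by [].
  by nra.
rewrite -(subnKC (ltnW m_gt)) sum_split_nat.
have head : \sum_(0 <= s < t) a s <= c * t%:R by exact: sum_const_le.
have tail : \sum_(0 <= i < m - t) a (i + t)%N <=
            2^-1 * \sum_(0 <= i < m - t) a i.
  by rewrite mulr_sumr; apply: ler_sum => i _; rewrite mulrC.
have tail_IH : \sum_(0 <= i < m - t) a i <= 2%:R * c * t%:R.
  by apply: IH; rewrite ltn_subrL t_gt0; apply: leq_trans m_gt.
lra.
Qed.

Section Stochastic.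
Variables (R : realFieldType) (n : nat) (P : 'M[R]_n.+1).
Local Notation V := 'I_n.+1.
Hypothesis P_stoch : stochastic P.

Lemma P_ge0 u v : 0 <= P u v. Proof. by case: P_stoch. Qed.
Lemma P_row u : \sum_v P u v = 1. Proof. by case: P_stoch. Qed.

Lemma Pt_ge0 t u v : 0 <= (P ^+ t) u v.
Proof.
elim: t u v => [|t IH] u v; first by rewrite expr0 mxE ler0n.
rewrite exprSr mxE; apply: sumr_ge0 => k _; apply: mulr_ge0 => //; exact: P_ge0.
Qed.

Lemma Pt_row t u : \sum_v (P ^+ t) u v = 1.
Proof.
elim: t u => [|t IH] u.
  under eq_bigr do rewrite expr0 mxE.
  rewrite (bigD1 u) //= eqxx big1 ?addr0 // => v /negbTE.
  by rewrite eq_sym => ->.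
rewrite exprS; under eq_bigr do rewrite mxE.
rewrite exchange_big /=; under eq_bigr do rewrite -mulr_sumr IH mulr1.
exact: P_row.
Qed.

Lemma P_support_sum (v : V) : \sum_(u in [set u | 0 < P v u]) P v u = 1.
Proof.
rewrite -(P_row v) [RHS](bigID (mem [set u | 0 < P v u])) /=.
rewrite [X in _ = _ + X]big1 ?addr0; first by apply: eq_bigl => u; rewrite inE.
move=> u; rewrite inE => Hu; apply/eqP; rewrite eq_le P_ge0 // andbT.
by rewrite leNgt.
Qed.

End Stochastic.

Section Stationary.
Variables (R : realFieldType) (n : nat) (P : 'M[R]_n.+1) (pi : 'rV[R]_n.+1).
Hypothesis P_stoch : stochastic P.
Hypothesis P_irr : irreducible P.
Hypothesis pi_stat : stationary_distribution P pi.
Hypothesis P_rev : reversible P pi.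

Lemma pi_ge0 u : 0 <= pi 0 u. Proof. by case: pi_stat. Qed.
Lemma pi_sum : \sum_u pi 0 u = 1. Proof. by case: pi_stat. Qed.

Lemma pi_Pt t : pi *m P ^+ t = pi.
Proof.
case: pi_stat => _ _ H; elim: t => [|t IH]; first by rewrite expr0 mulmx1.
by rewrite exprSr mulmxA IH.
Qed.

(* Irreducibility spreads the positive mass of pi to every state. *)
Lemma pi_gt0 u : 0 < pi 0 u.
Proof.
have [v pi_v] : exists v, 0 < pi 0 v.
  apply/existsP; apply: contraT; rewrite negb_exists => /forallP H.
  have : \sum_u pi 0 u = 0.
    apply: big1 => w _; apply/eqP; rewrite eq_le pi_ge0 andbT.
    by have := H w; rewrite -leNgt.
  by rewrite pi_sum => /eqP; rewrite oner_eq0.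
have [t Ht] := P_irr v u.
have := congr1 (fun M : 'rV[R]_n.+1 => M 0 u) (pi_Pt t); rewrite mxE => <-.
rewrite (bigD1 v) //= ltr_pwDl ?mulr_gt0 //.
apply: sumr_ge0 => k _; apply: mulr_ge0; [exact: pi_ge0 | exact: Pt_ge0].
Qed.

Lemma pi_min_le u : pi_min pi <= pi 0 u.
Proof. exact: bigmin_le. Qed.

Lemma pi_min_gt0 : 0 < pi_min pi.
Proof. apply/bigmin_gtP; split => [|i _]; exact: pi_gt0. Qed.

Lemma reversible_Pt t u v : pi 0 u * (P ^+ t) u v = pi 0 v * (P ^+ t) v u.
Proof.
elim: t u v => [|t IH] u v.
  rewrite expr0 !mxE eq_sym; case: eqP => [->|] //; by rewrite !mulr0.
rewrite [in LHS]exprS [in RHS]exprSr !mxE !mulr_sumr; apply: eq_bigr => k _.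
by rewrite mulrA P_rev -mulrA mulrCA IH mulrA [_ * P k u]mulrC.
Qed.

Lemma col_sum_le u : \sum_v P v u <= pi 0 u / pi_min pi.
Proof.
have P_vu v : P v u = pi 0 u * P u v / pi 0 v.
  by rewrite P_rev mulrC mulrA mulVf ?mul1r // gt_eqF // pi_gt0.
rewrite -[pi 0 u / _]mulr1 -(P_row P_stoch u) mulr_sumr.
apply: ler_sum => v _; rewrite P_vu [_ / pi_min _ * _]mulrAC.
apply: ler_wpM2l; first by apply: mulr_ge0; [exact: pi_ge0 | exact: P_ge0].
by rewrite lef_pV2 ?posrE ?pi_gt0 ?pi_min_gt0 // pi_min_le.
Qed.

End Stationary.

Section Contraction.
Variables (R : realFieldType) (n : nat).
Local Notation V := 'I_n.+1.

(* Product coupling of two measures p, q of equal mass m: m (p - q) F is the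
   average of F u - F v over the pairs (u, v) weighted by p u * q v. *)
Lemma coupling_identity (p q F : V -> R) :
  \sum_u q u = \sum_u p u ->
  (\sum_u p u) * \sum_u (p u - q u) * F u =
  \sum_u \sum_v p u * q v * (F u - F v).
Proof.
move=> mass_eq.
have pq_Fu : \sum_u \sum_v p u * q v * F u = (\sum_u p u) * \sum_u p u * F u.
  rewrite -{1}mass_eq mulr_sumr; apply: eq_bigr => u _.
  by rewrite mulr_suml; apply: eq_bigr => v _; ring.
have pq_Fv : \sum_u \sum_v p u * q v * F v = (\sum_u p u) * \sum_v q v * F v.
  rewrite exchange_big mulr_sumr; apply: eq_bigr => v _ /=.
  by rewrite mulr_suml; apply: eq_bigr => u _; ring.
under [RHS]eq_bigr do rewrite (eq_bigr _ (fun v _ => mulrBr _ _ _)) sumrB.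
rewrite sumrB pq_Fu pq_Fv -mulrBr -sumrB.
by congr (_ * _); apply: eq_bigr => u _; ring.
Qed.

Variable Q : 'M[R]_n.+1.
Hypothesis Q_ge0 : forall u v, 0 <= Q u v.
Hypothesis Q_row : forall u, \sum_v Q u v = 1.

Lemma l1_contraction (mu : V -> R) :
  \sum_x `|\sum_u mu u * Q u x| <= \sum_u `|mu u|.
Proof.
apply: (le_trans (y := \sum_x \sum_u `|mu u| * Q u x)).
  apply: ler_sum => x _; apply: (le_trans (ler_norm_sum _ _ _)).
  by apply: ler_sum => u _; rewrite normrM (ger0_norm (Q_ge0 _ _)).
rewrite exchange_big /=; apply: ler_sum => u _.
by rewrite -mulr_sumr Q_row mulr1.
Qed.

Lemma dobrushin_contraction (mu : V -> R) (D : R) :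
  \sum_u mu u = 0 ->
  (forall u v, \sum_x `|Q u x - Q v x| <= 2%:R * D) ->
  \sum_x `|\sum_u mu u * Q u x| <= D * \sum_u `|mu u|.
Proof.
move=> mu_sum0 rows_close.
pose p u := (`|mu u| + mu u) / 2%:R.
pose q u := (`|mu u| - mu u) / 2%:R.
have mu_pq u : mu u = p u - q u by rewrite /p /q; lra.
have p_ge0 u : 0 <= p u by have := ler_norm (- mu u); rewrite normrN /p; lra.
have q_ge0 u : 0 <= q u by have := ler_norm (mu u); rewrite /q; lra.
pose m := \sum_u p u.
have q_mass : \sum_u q u = m.
  have : m - \sum_u q u = 0.
    by rewrite /m -sumrB -[RHS]mu_sum0; apply: eq_bigr => u _; rewrite mu_pq.
  by move/eqP; rewrite subr_eq0 => /eqP.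
have mu_norm : \sum_u `|mu u| = 2%:R * m.
  rewrite (_ : 2%:R * m = m + \sum_u q u); last by rewrite q_mass; lra.
  by rewrite /m -big_split /=; apply: eq_bigr => u _; rewrite /p /q; lra.
have m_ge0 : 0 <= m by apply: sumr_ge0.
have [m_gt0 | m_le0] := ltrP 0 m; last first.
  have m0 : m = 0 by apply/eqP; rewrite eq_le m_le0 m_ge0.
  have mu0 u : mu u = 0.
    apply/eqP; rewrite -normr_eq0; move: mu_norm; rewrite m0 mulr0 => /eqP.
    by rewrite psumr_eq0 // => /allP /(_ u (mem_index_enum u)).
  by rewrite mu_norm m0 !mulr0 big1 // => x _; rewrite big1 ?normr0 // => u _; rewrite mu0 mul0r.
have coupled x : m * (\sum_u mu u * Q u x) =
    \sum_u \sum_v p u * q v * (Q u x - Q v x).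
  rewrite -(coupling_identity (fun u => Q u x) q_mass).
  by congr (_ * _); apply: eq_bigr => u _; rewrite mu_pq.
rewrite -(ler_pM2l m_gt0) mulr_sumr.
under eq_bigr do rewrite -(ger0_norm m_ge0) -normrM (ger0_norm m_ge0) coupled.
apply: (le_trans (y := \sum_u \sum_v p u * q v * (2%:R * D))).
  apply: (le_trans (y := \sum_x \sum_u \sum_v p u * q v * `|Q u x - Q v x|)).
    apply: ler_sum => x _; apply: le_trans (ler_norm_sum _ _ _) _.
    apply: ler_sum => u _; apply: le_trans (ler_norm_sum _ _ _) _.
    by apply: ler_sum => v _; rewrite normrM ger0_norm // mulr_ge0.
  rewrite exchange_big /=; apply: ler_sum => u _.
  rewrite exchange_big /=; apply: ler_sum => v _.
  by rewrite -mulr_sumr; apply: ler_wpM2l; [exact: mulr_ge0 | exact: rows_close].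
have -> : \sum_u \sum_v p u * q v * (2%:R * D) = m * m * (2%:R * D).
  transitivity (\sum_u p u * m * (2%:R * D)).
    apply: eq_bigr => u _; rewrite -q_mass mulr_sumr mulr_suml.
    by apply: eq_bigr => v _; ring.
  by rewrite /m [in RHS]mulr_suml [in RHS]mulr_suml.
by rewrite mu_norm le_eqVlt; apply/orP; left; apply/eqP; ring.
Qed.

End Contraction.

Section Mixing.
Variables (R : realFieldType) (n : nat) (P : 'M[R]_n.+1) (pi : 'rV[R]_n.+1).
Local Notation V := 'I_n.+1.
Hypothesis P_stoch : stochastic P.
Hypothesis pi_stat : stationary_distribution P pi.

(* l1 distance between the row w of P^s and pi (twice the TV distance). *)
Definition row_dev (w : V) (s : nat) : R := \sum_u `|(P ^+ s) w u - pi 0 u|.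

Lemma row_dev_ge0 w s : 0 <= row_dev w s.
Proof. exact: sumr_ge0. Qed.

Lemma row_dev_le2 w s : row_dev w s <= 2%:R.
Proof.
apply: (le_trans (y := \sum_u ((P ^+ s) w u + pi 0 u))).
  apply: ler_sum => u _; apply: le_trans (ler_normB _ _) _.
  by rewrite !ger0_norm ?(pi_ge0 pi_stat) ?(Pt_ge0 P_stoch).
by rewrite big_split /= (Pt_row P_stoch) (pi_sum pi_stat).
Qed.

Lemma row_dev_mass0 w s : \sum_u ((P ^+ s) w u - pi 0 u) = 0.
Proof. by rewrite sumrB (Pt_row P_stoch) (pi_sum pi_stat) subrr. Qed.

Lemma row_dev_step w s m x :
  (P ^+ (s + m)) w x - pi 0 x = \sum_u ((P ^+ s) w u - pi 0 u) * (P ^+ m) u x.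
Proof.
rewrite exprD mxE -[in pi 0 x](pi_Pt pi_stat m) mxE -sumrB.
by apply: eq_bigr => u _; rewrite mulrBl.
Qed.

Lemma row_dev_nonincr w s s' : (s <= s')%N -> row_dev w s' <= row_dev w s.
Proof.
move/subnKC <-; elim: (s' - s)%N => [|k IH]; first by rewrite addn0.
apply: le_trans IH; rewrite /row_dev addnS -(addn1 (s + k)).
under eq_bigr do rewrite row_dev_step.
by apply: l1_contraction => [u v|u]; [exact: Pt_ge0 | exact: Pt_row].
Qed.

(* If every row of P^m is within 1/2 of pi, then m more steps halve the
   deviation of any row (Dobrushin contraction with D = 1/2). *)
Lemma row_dev_halve w s m :
  (forall v, row_dev v m <= 2^-1) -> row_dev w (s + m) <= row_dev w s / 2%:R.
Proof.
move=> mixed; rewrite /row_dev; under eq_bigr do rewrite row_dev_step.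
rewrite mulrC; apply: dobrushin_contraction; rewrite ?row_dev_mass0 // => u v.
apply: (le_trans (y := row_dev u m + row_dev v m)); last first.
  by have := mixed u; have := mixed v; lra.
rewrite /row_dev -big_split /=; apply: ler_sum => x _.
by rewrite [X in _ <= _ + X]distrC; apply: ler_distD.
Qed.

Variable tstar : nat.
Hypothesis tstar_rate : is_mixing_rate P pi tstar.

Lemma row_dev_tstar v : row_dev v tstar <= 2^-1.
Proof.
case: tstar_rate => reach _; have [t [t_le dist_t]] := reach v.
apply: le_trans (row_dev_nonincr v t_le) _.
by move: dist_t; rewrite /dist_to_stat /dTV -/(row_dev v t); lra.
Qed.

Lemma row_dev_sum_bound w T : \sum_(0 <= s < T) row_dev w s <= 3%:R * tstar%:R.
Proof.
have tail : \sum_(0 <= s < T) row_dev w (s + tstar) <= tstar%:R.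
  have -> : (tstar%:R : R) = 2%:R * 2^-1 * tstar%:R by rewrite divff ?mul1r ?pnatr_eq0.
  apply: halving_sum_bound => [s | s | s]; first exact: row_dev_ge0.
    by apply: le_trans (row_dev_tstar w); apply: row_dev_nonincr; rewrite leq_addl.
  by apply: row_dev_halve; exact: row_dev_tstar.
have head : \sum_(0 <= s < tstar) row_dev w s <= 2%:R * tstar%:R.
  by apply: sum_const_le; exact: row_dev_le2.
have dropped : 0 <= \sum_(0 <= s < tstar) row_dev w (s + T)%N.
  by apply: sumr_ge0 => s _; exact: row_dev_ge0.
have := sum_split_nat T tstar (row_dev w).
rewrite addnC sum_split_nat; lra.
Qed.

End Mixing.

Section Billiard.
Variables (R : realFieldType) (n : nat) (P : 'M[R]_n.+1).
Local Notation V := 'I_n.+1.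
Variable sigma : V -> nat -> V.

Lemma Icount_sum v a k : (\sum_u Icount sigma v u a (a + k))%N = k.
Proof.
rewrite /Icount exchange_big /= (eq_bigr (fun _ => 1%N)).
  by rewrite sum_nat_const_nat muln1 addKn.
move=> j _; rewrite (bigD1 (sigma v j)) //= eqxx big1 // => u /negbTE.
by rewrite eq_sym => ->.
Qed.

Hypothesis P_stoch : stochastic P.
Hypothesis billiard : billiard_router P sigma.
Variable v : V.
Local Notation I u z := (Icount sigma v u 0 z).
Local Notation N := [set u | 0 < P v u].

Lemma Icount_out u a b : ~~ (0 < P v u) -> Icount sigma v u a b = 0%N.
Proof.
move=> Hu; rewrite /Icount big_nat_cond big1 // => j _.
by case: eqP => // Hj; case: (billiard v j); rewrite Hj => H _; rewrite H in Hu.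
Qed.

Lemma I_succ u z : I u z.+1 = (I u z + (sigma v z == u))%N.
Proof. by rewrite /Icount big_nat_recr. Qed.

Lemma billiard_balance z u x : 0 < P v u -> 0 < P v x ->
  (I u z)%:R * P v x <= ((I x z)%:R + 1) * P v u.
Proof.
elim: z u x => [|z IH] u x Hu Hx.
  by rewrite /Icount !big_geq //= mul0r add0r mul1r ltW.
have [Pc c_min] := billiard v z.
set c := sigma v z in Pc c_min *.
have c_le y : 0 < P v y -> ((I c z)%:R + 1) * P v y <= ((I y z)%:R + 1) * P v c.
  move=> Hy; have := c_min y Hy.
  by rewrite ler_pdivrMr // mulrAC ler_pdivlMr // !mulrSr.
rewrite !I_succ !natrD.
have IHux := IH u x Hu Hx.
case: (eqVneq c u) => [<-|cu]; case: (eqVneq c x) => [<-|cx] //=.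
- by have := ltW Pc; nra.
- by rewrite addr0; exact: c_le x Hx.
- by have := IH u c Hu Pc; have := ltW Hu; nra.
- by rewrite !addr0.
Qed.

Lemma N_sum_I z : \sum_(u in N) ((I u z)%:R : R) = z%:R.
Proof.
rewrite -{2}(Icount_sum v 0 z) natr_sum [RHS](bigID (mem N)) /=.
rewrite [X in _ = _ + X]big1 ?addr0; first by apply: eq_bigl => u; rewrite inE.
by move=> u; rewrite inE => Hu; rewrite Icount_out.
Qed.

(* Summing the balance invariant over u in N(v) bounds I_x(z) from above ... *)
Lemma I_upper z x : 0 < P v x ->
  (I x z)%:R <= (z%:R + (deg P v)%:R - 1) * P v x.
Proof.
move=> Hx.
have E : \sum_(u in N) (((I u z)%:R + 1) * P v x - (I x z)%:R * P v u)
         = (z%:R + (deg P v)%:R) * P v x - (I x z)%:R.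
  rewrite sumrB -mulr_suml -mulr_sumr big_split /= N_sum_I sumr_const.
  by rewrite (P_support_sum P_stoch) mulr1.
have G : P v x <= \sum_(u in N) (((I u z)%:R + 1) * P v x - (I x z)%:R * P v u).
  rewrite (bigD1 x) ?inE //= -{1}(addr0 (P v x)); apply: lerD.
    by rewrite le_eqVlt; apply/orP; left; apply/eqP; ring.
  apply: sumr_ge0 => u; rewrite inE => /andP [Hu _].
  by rewrite subr_ge0; apply: billiard_balance.
by rewrite E in G; lra.
Qed.

(* ... and from below. *)
Lemma I_lower z x : 0 < P v x -> (z%:R + 1) * P v x - 1 <= (I x z)%:R.
Proof.
move=> Hx.
have E : \sum_(u in N) (((I x z)%:R + 1) * P v u - (I u z)%:R * P v x)
         = ((I x z)%:R + 1) - z%:R * P v x.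
  by rewrite sumrB -mulr_suml -mulr_sumr N_sum_I (P_support_sum P_stoch) mulr1.
have G : P v x <= \sum_(u in N) (((I x z)%:R + 1) * P v u - (I u z)%:R * P v x).
  rewrite (bigD1 x) ?inE //= -{1}(addr0 (P v x)); apply: lerD.
    by rewrite le_eqVlt; apply/orP; left; apply/eqP; ring.
  apply: sumr_ge0 => u; rewrite inE => /andP [Hu _].
  by rewrite subr_ge0; apply: billiard_balance.
by rewrite E in G; lra.
Qed.

Lemma billiard_discrepancy u a c : 0 < P v u ->
  `|(Icount sigma v u a (a + c))%:R - c%:R * P v u|
    <= 1 + ((deg P v)%:R - 2%:R) * P v u.
Proof.
move=> Hu.
have window : (Icount sigma v u a (a + c))%:R = (I u (a + c))%:R - (I u a)%:R :> R.
  have I_cat : (I u (a + c) = I u a + Icount sigma v u a (a + c))%N.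
    by rewrite /Icount (big_cat_nat _ (n := a)) ?leq_addr.
  by rewrite I_cat natrD addrC addKr.
rewrite window.
have := I_upper (a + c) Hu; have := I_lower (a + c) Hu.
have := I_upper a Hu; have := I_lower a Hu.
rewrite natrD => h1 h2 h3 h4.
by rewrite ler_norml; apply/andP; split; nra.
Qed.

End Billiard.

Section Degree.
Variables (R : realFieldType) (n : nat) (P : 'M[R]_n.+1) (pi : 'rV[R]_n.+1).
Local Notation V := 'I_n.+1.
Hypothesis P_stoch : stochastic P.
Hypothesis P_irr : irreducible P.
Hypothesis pi_stat : stationary_distribution P pi.
Hypothesis P_rev : reversible P pi.

Lemma deg_le v : (deg P v <= max_deg P)%N.
Proof. exact: (leq_bigmax v). Qed.

Lemma deg_ge1 v u : 0 < P v u -> (1 <= deg P v)%N.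
Proof. by move=> Hu; rewrite /deg card_gt0; apply/set0Pn; exists u; rewrite inE. Qed.

Lemma max_deg_ge1 : (1 <= max_deg P)%N.
Proof.
have [u Hu] : exists u, 0 < P ord0 u.
  apply/existsP; apply: contraT; rewrite negb_exists => /forallP H.
  have : \sum_u P ord0 u = 0.
    apply: big1 => w _; apply/eqP; rewrite eq_le (P_ge0 P_stoch) andbT.
    by have := H w; rewrite -leNgt.
  by rewrite (P_row P_stoch) => /eqP; rewrite oner_eq0.
exact: leq_trans (deg_ge1 Hu) (deg_le _).
Qed.

Lemma deg1_P1 v u : deg P v = 1%N -> 0 < P v u -> P v u = 1.
Proof.
move=> deg1 Hu.
have /cards1P [x Nx] : #|[set y | 0 < P v y]| == 1%N by rewrite -/(deg P v) deg1.
have := P_support_sum P_stoch v; rewrite Nx big_set1 => <-.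
have : u \in [set y | 0 < P v y] by rewrite inE.
by rewrite Nx inE => /eqP ->.
Qed.

(* Reversibility makes the support of P symmetric, so in-degrees are
   bounded by Delta as well. *)
Lemma indeg_le u : (#|[set v | (0 < P v u)%R]| <= max_deg P)%N.
Proof.
apply: leq_trans (deg_le u); apply: subset_leq_card.
apply/subsetP => v; rewrite !inE => Pvu.
rewrite lt_neqAle (P_ge0 P_stoch) andbT; apply/eqP => Puv0.
have := P_rev u v; rewrite -Puv0 mulr0 => rev0.
by have := mulr_gt0 (pi_gt0 P_stoch P_irr pi_stat v) Pvu; rewrite -rev0 ltxx.
Qed.

Definition edge_discrepancy (v u : V) : R :=
  if 0 < P v u then 1 + ((deg P v)%:R - 2%:R) * P v u else 0.

Lemma edge_discrepancy_sum u :
  \sum_v edge_discrepancy v u <= 2%:R * ((max_deg P)%:R - 1) * (pi 0 u / pi_min pi).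
Proof.
have ratio_ge1 : 1 <= pi 0 u / pi_min pi.
  by rewrite ler_pdivlMr ?mul1r ?pi_min_le // (pi_min_gt0 P_stoch P_irr pi_stat).
have [Delta_le1 | Delta_gt1] := leqP (max_deg P) 1.
  have Delta1 : max_deg P = 1%N by apply/eqP; rewrite eqn_leq Delta_le1 max_deg_ge1.
  rewrite big1 ?Delta1 ?subrr ?mulr0 ?mul0r // => v _; rewrite /edge_discrepancy.
  case: ifP => // Pvu.
  have dv : deg P v = 1%N by apply/eqP; rewrite eqn_leq -{1}Delta1 deg_le (deg_ge1 Pvu).
  by rewrite dv (deg1_P1 dv Pvu); lra.
have edge_le v : edge_discrepancy v u <=
    ((0 < P v u)%R)%:R + ((max_deg P)%:R - 2%:R) * P v u.
  rewrite /edge_discrepancy; case: ifP => Pvu.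
    by rewrite lerD2l ler_wpM2r ?(P_ge0 P_stoch) // lerB // ler_nat deg_le.
  have -> : P v u = 0 by apply/eqP; rewrite eq_le (P_ge0 P_stoch) andbT leNgt Pvu.
  by rewrite mulr0 addr0.
apply: le_trans (ler_sum _ (fun v _ => edge_le v)) _.
rewrite big_split /= -mulr_sumr.
have indeg : \sum_v (((0 < P v u)%R)%:R : R) <= (max_deg P)%:R.
  have -> : \sum_v (((0 < P v u)%R)%:R : R) = (#|[set v | (0 < P v u)%R]|)%:R.
    rewrite -sum1dep_card natr_sum [RHS]big_mkcond /=.
    by apply: eq_bigr => v _; case: ifP.
  by rewrite ler_nat indeg_le.
have colsum := col_sum_le P_stoch P_irr pi_stat P_rev u.
have Delta_ge2 : (2%:R : R) <= (max_deg P)%:R by rewrite ler_nat.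
nra.
Qed.

End Degree.

Section Router.
Variables (R : realFieldType) (n : nat) (P : 'M[R]_n.+1).
Local Notation V := 'I_n.+1.
Variables (sigma : V -> nat -> V) (chi0 : V -> nat).
Hypothesis P_stoch : stochastic P.
Local Notation load t := (chi sigma chi0 t).

Definition sent (t : nat) : V -> nat := (router_state sigma chi0 t).2.

Lemma load_succ t u :
  load t.+1 u = (\sum_v Icount sigma v u (sent t v) (sent t v + load t v))%N.
Proof. by rewrite /chi /sent /=; case: (router_state sigma chi0 t). Qed.

Definition routing_error (t : nat) (u : V) : R :=
  (load t.+1 u)%:R - \sum_v (load t v)%:R * P v u.

(* Routing conserves the number of tokens, so the error has mass 0. *)
Lemma routing_error_mass0 t : \sum_u routing_error t u = 0.
Proof.
rewrite sumrB; apply/eqP; rewrite subr_eq0; apply/eqP.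
under eq_bigr do rewrite load_succ natr_sum.
rewrite exchange_big /= [RHS]exchange_big /=; apply: eq_bigr => v _.
by rewrite -natr_sum Icount_sum -mulr_sumr (P_row P_stoch) mulr1.
Qed.

Lemma routing_error_bound t u :
  billiard_router P sigma -> `|routing_error t u| <= \sum_v edge_discrepancy P v u.
Proof.
move=> billiard.
rewrite /routing_error load_succ natr_sum -sumrB.
apply: le_trans (ler_norm_sum _ _ _) _; apply: ler_sum => v _.
rewrite /edge_discrepancy; case: ifP => Pvu; first exact: billiard_discrepancy.
rewrite (Icount_out billiard) ?Pvu //.
have -> : P v u = 0 by apply/eqP; rewrite eq_le (P_ge0 P_stoch) andbT leNgt Pvu.
by rewrite mulr0 subrr normr0.
Qed.

Definition load_vec (t : nat) : 'rV[R]_n.+1 := \row_u ((load t u)%:R : R).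
Definition error_vec (t : nat) : 'rV[R]_n.+1 := \row_u routing_error t u.

Lemma load_vec_succ t : load_vec t.+1 = load_vec t *m P + error_vec t.
Proof.
apply/rowP => u; rewrite !mxE /routing_error.
under [X in _ = X + _]eq_bigr do rewrite mxE.
by rewrite addrC subrK.
Qed.

Lemma load_vec_unroll T :
  load_vec T = load_vec 0 *m P ^+ T + \sum_(i < T) error_vec (T.-1 - i) *m P ^+ i.
Proof.
elim: T => [|T IH]; first by rewrite big_ord0 expr0 mulmx1 addr0.
have powS k : P ^+ k *m P = P ^+ k.+1 by rewrite exprSr mulmxE.
rewrite load_vec_succ IH mulmxDl mulmx_suml -mulmxA powS.
rewrite big_ord_recl /= subn0 expr0 mulmx1 -addrA; congr (_ + _).
rewrite addrC; congr (_ + _); apply: eq_bigr => i _.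
by rewrite -mulmxA powS /= subnS predn_sub.
Qed.

(* Coordinatewise: since every error has mass 0, any row vector pi may be
   subtracted from the rows of P^i. *)
Lemma load_minus_mu (pi : 'rV[R]_n.+1) T w :
  (load T w)%:R - mu P chi0 T 0 w =
  \sum_(i < T) \sum_u routing_error (T.-1 - i) u * ((P ^+ i) u w - pi 0 w).
Proof.
have := congr1 (fun M : 'rV[R]_n.+1 => M 0 w) (load_vec_unroll T).
rewrite /load_vec mxE [in X in _ = X -> _]mxE summxE => ->.
rewrite /mu addrAC subrr add0r; apply: eq_bigr => i _; rewrite mxE.
under eq_bigr do rewrite mxE.
under [RHS]eq_bigr do rewrite mulrBr.
by rewrite sumrB -mulr_suml routing_error_mass0 mul0r subr0.
Qed.

End Router.

Section ErrorTerm.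
Variables (R : realFieldType) (n : nat) (P : 'M[R]_n.+1) (pi : 'rV[R]_n.+1).
Local Notation V := 'I_n.+1.
Variables (sigma : V -> nat -> V) (chi0 : V -> nat).
Hypothesis P_stoch : stochastic P.
Hypothesis P_irr : irreducible P.
Hypothesis pi_stat : stationary_distribution P pi.
Hypothesis P_rev : reversible P pi.
Hypothesis billiard : billiard_router P sigma.

(* One summand of the unrolled discrepancy: reversibility of P^i exchanges
   the column deviation at w for the row deviation of w, at the price of the
   factor pi_w / pi_u, which cancels the pi_u of the error bound. *)
Lemma error_term_bound t i u w :
  `|routing_error P sigma chi0 t u * ((P ^+ i) u w - pi 0 w)| <=
  2%:R * ((max_deg P)%:R - 1) * (pi 0 w / pi_min pi) * `|(P ^+ i) w u - pi 0 u|.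
Proof.
have pi_u := pi_gt0 P_stoch P_irr pi_stat u.
have pi_w := pi_gt0 P_stoch P_irr pi_stat w.
have err_le : `|routing_error P sigma chi0 t u| <=
    2%:R * ((max_deg P)%:R - 1) * (pi 0 u / pi_min pi).
  apply: le_trans (routing_error_bound chi0 P_stoch t u billiard) _.
  exact: (edge_discrepancy_sum P_stoch P_irr pi_stat P_rev).
have dev_swap : pi 0 u * `|(P ^+ i) u w - pi 0 w| = pi 0 w * `|(P ^+ i) w u - pi 0 u|.
  have signed : pi 0 u * ((P ^+ i) u w - pi 0 w) = pi 0 w * ((P ^+ i) w u - pi 0 u).
    by rewrite !mulrBr (reversible_Pt P_rev i u w) [pi 0 u * _]mulrC.
  by rewrite -{1}(ger0_norm (ltW pi_u)) -normrM signed normrM ger0_norm // ltW.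
rewrite normrM; apply: le_trans (ler_wpM2r (normr_ge0 _) err_le) _.
rewrite le_eqVlt; apply/orP; left; apply/eqP.
transitivity (2%:R * ((max_deg P)%:R - 1) / pi_min pi *
              (pi 0 u * `|(P ^+ i) u w - pi 0 w|)); first by ring.
by rewrite dev_swap; ring.
Qed.

End ErrorTerm.

Unset Implicit Arguments. Set Strict Implicit. Set Printing Implicit Defensive.

Theorem theorem5p4 (R : realFieldType) (n : nat)
  (P : 'M[R]_n.+1) (pi : 'rV[R]_n.+1) (tstar : nat)
  (sigma : 'I_n.+1 -> nat -> 'I_n.+1) (chi0 : 'I_n.+1 -> nat) :
  stochastic P -> ergodic P -> stationary_distribution P pi ->
  reversible P pi -> is_mixing_rate P pi tstar ->
  billiard_router P sigma ->
  forall (w : 'I_n.+1) (T : nat),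
    `| (chi sigma chi0 T w)%:R - mu P chi0 T 0 w |
      <= 6%:R * pi 0 w / pi_min pi * tstar%:R * ((max_deg P)%:R - 1).
Proof.
move=> P_stoch [P_irr _] pi_stat P_rev tstar_rate billiard w T.
pose K : R := 2%:R * ((max_deg P)%:R - 1) * (pi 0 w / pi_min pi).
have K_ge0 : 0 <= K.
  have Delta_ge1 : (1 : R) <= (max_deg P)%:R by rewrite ler1n max_deg_ge1.
  have pi_w := pi_gt0 P_stoch P_irr pi_stat w.
  have pi_min_pos := pi_min_gt0 P_stoch P_irr pi_stat.
  rewrite /K; apply: mulr_ge0; first by rewrite mulr_ge0 // subr_ge0.
  by rewrite divr_ge0 // ltW.
rewrite (load_minus_mu sigma chi0 P_stoch pi).
apply: le_trans (ler_norm_sum _ _ _) _.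
apply: (le_trans (y := \sum_(i < T) K * row_dev P pi w i)).
  apply: ler_sum => i _; apply: le_trans (ler_norm_sum _ _ _) _.
  rewrite /row_dev mulr_sumr; apply: ler_sum => u _.
  exact: (error_term_bound chi0 P_stoch P_irr pi_stat P_rev billiard).
rewrite -mulr_sumr -(big_mkord xpredT (row_dev P pi w)).
apply: le_trans (ler_wpM2l K_ge0 (row_dev_sum_bound P_stoch pi_stat tstar_rate w T)) _.
by rewrite /K le_eqVlt; apply/orP; left; apply/eqP; ring.
Qed.
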